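(* Let $P$ be a set partition of $[n]$ with $3\le |P|\le n-1$, and let $Q\le P$ be a set partition with $|Q|\ge 3$. Then there is a set partition $Q'$ with $Q'\preceq P$ and $Q\le Q'$, and moreover $Z_Q(H)\subset Z_{Q'}(H)$ for every $H\in S(n)$.
   Context: $[n]=\{1,\dots,n\}$. A stable $n$-labeled tree is a finite tree with exactly $n$ leaves labeled bijectively by $[n]$, all of whose internal vertices have degree $\ge 3$; $V(G)$ is the set of internal vertices, $S(n)$ the set of such trees up to label-preserving isomorphism, $S_k(n)$ those with exactly $k$ internal vertices. $G\rightsquigarrow G'$ means $G'$ is obtained from $G$ by collapsing connected sets of internal vertices to single vertices, inducing a surjection $V(G)\to V(G')$; write $w\rightsquigarrow v$ if $w$ maps to $v$. Set partitions: for set partitions $P,Q$ of $[n]$, $P\le Q$ means $Q$ refines $P$ (every block of $Q$ is contained in a block of $P$). $P\preceq Q$ means $P\le Q$ and no block $B\in P$ with $|B|\ge 2$ is contained in the union of the singleton blocks of $Q$. Basic pairs: for a set partition $P$ with $3\le |P|\le n-1$, the basic pair $(G_P,v_P)$ is the tree in $S(n)$ with a central internal vertex $v_P$ such that for each block $B\in P$ with $|B|=1$ the leaf labeled by it is adjacent to $v_P$, and for each block $B$ with $|B|\ge2$ there is an internal vertex adjacent to $v_P$ and to the leaves labeled by $B$ (and to nothing else). For such $P$ define the assignment $Z_P$ by $Z_P(H)=\{w\in V(H): \text{there is a contraction } H\rightsquigarrow G_P \text{ with } w\rightsquigarrow v_P\}$. *)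

From mathcomp Require Import all_boot.
Set Implicit Arguments. Unset Strict Implicit. Unset Printing Implicit Defensive.

(** Set partitions of [n] = 'I_n (labels 0..n-1 stand for 1..n). *)
Definition setpart (n : nat) (P : {set {set 'I_n}}) : Prop :=
  partition P [set: 'I_n].

(** [ple P Q] is P <= Q : Q refines P (every block of Q lies in a block of P). *)
Definition ple (n : nat) (P Q : {set {set 'I_n}}) : Prop :=
  forall B, B \in Q -> exists2 C, C \in P & B \subset C.

Definition singles (n : nat) (Q : {set {set 'I_n}}) : {set 'I_n} :=
  \bigcup_(B in Q | #|B| == 1) B.

Definition pprec (n : nat) (P Q : {set {set 'I_n}}) : Prop :=
  ple P Q /\ (forall B, B \in P -> 2 <= #|B| -> ~~ (B \subset singles Q)).

(** An n-labeled tree, given by its internal vertices 'I_nv, the adjacency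
    relation between internal vertices, and for each leaf label i the
    internal vertex the leaf i is attached to. *)
Record ltree (n : nat) := LTree {
  nv : nat;
  adj : rel 'I_nv;
  lf : 'I_n -> 'I_nv }.
Arguments nv {n} l.
Arguments adj {n} l _ _.
Arguments lf {n} l _.

(** Stability: the graph (internal vertices + leaves) is a tree and every
    internal vertex has degree >= 3.  Leaves have degree 1, so being a tree
    amounts to the internal graph being a tree (connected, no simple cycle). *)
Definition stable (n : nat) (T : ltree n) : Prop :=
  [/\ symmetric (adj T), irreflexive (adj T),
      (forall u v, connect (adj T) u v),
      ~ (exists c : seq 'I_(nv T), [/\ 3 <= size c, uniq c & cycle (adj T) c]) &
      (forall v, 3 <= #|[set u | adj T v u]| + #|[set i | lf T i == v]|)].

(** f : V(H) -> V(G) is a contraction H ~> G: G is (isomorphic, via f, to)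
    the tree obtained from H by collapsing the connected fibres of f. *)
Definition contraction (n : nat) (H G : ltree n) (f : 'I_(nv H) -> 'I_(nv G)) : Prop :=
  [/\ (forall u', exists u, f u = u'),
      (forall u1 u2, f u1 = f u2 ->
         connect [rel x y | [&& adj H x y, f x == f u1 & f y == f u1]] u1 u2),
      (forall i, lf G i = f (lf H i)) &
      (forall u' v', adj G u' v' <->
         (u' <> v' /\ exists u v, [/\ adj H u v, f u = u' & f v = v']))].

Definition basic_pair (n : nat) (P : {set {set 'I_n}}) (G : ltree n) (v : 'I_(nv G)) : Prop :=
  [/\ stable G,
      (forall B, B \in P -> #|B| = 1 -> forall i, i \in B -> lf G i = v),
      (forall B, B \in P -> 2 <= #|B| ->
         exists u, [/\ adj G v u,
                       (forall i, (lf G i == u) = (i \in B)) &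
                       (forall x, adj G u x -> x = v)]) &
      (forall u, u = v \/ exists i, u = lf G i)].

Arguments contraction {n} H G f.
Arguments basic_pair {n} P G v.

Definition inZ (n : nat) (P : {set {set 'I_n}}) (H : ltree n) (w : 'I_(nv H)) : Prop :=
  exists (G : ltree n) (v : 'I_(nv G)) (f : 'I_(nv H) -> 'I_(nv G)),
    [/\ basic_pair P G v, contraction H G f & f w = v].
Arguments inZ {n} P H w.

From mathcomp Require Import all_boot zify.
Set Implicit Arguments. Unset Strict Implicit. Unset Printing Implicit Defensive.

(* Let Q' be Q with every block of size at least 2 that lies inside the union
   of the singleton blocks of P shattered into singletons; then Q' refines Q
   and is refined by P in the sense of the order ⪯.  A basic pair (G, v) for Q
   is a star: every internal vertex other than v carries exactly the leaves of
   one block of Q of size at least 2.  Contracting into v the vertices that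
   carry shattered blocks turns it into a basic pair for Q', so composing a
   contraction H ~> G_Q sending w to v_Q with this one puts w in Z_Q'(H). *)

Lemma trivIset_block_eq (T : finType) (Q : {set {set T}}) B1 B2 x :
  trivIset Q -> B1 \in Q -> B2 \in Q -> x \in B1 -> x \in B2 -> B1 = B2.
Proof. by move=> tQ Q1 Q2 x1 x2; rewrite -(def_pblock tQ Q1 x1) (def_pblock tQ Q2 x2). Qed.

Lemma setpart_block n (Q : {set {set 'I_n}}) (i : 'I_n) :
  setpart Q -> exists2 B, B \in Q & i \in B.
Proof.
case/and3P=> /eqP covQ _ _.
have iQ : i \in cover Q by rewrite covQ inE.
by exists (pblock Q i); [apply: pblock_mem | rewrite mem_pblock].
Qed.

Lemma star_connect (T : finType) (e : rel T) (c : T) :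
  symmetric e -> (forall x, x != c -> e c x) -> forall x y, connect e x y.
Proof.
move=> esym ec.
have toc x : connect e x c.
  by have [->|xc] := eqVneq x c; [exact: connect0 | rewrite connect1 // esym ec].
have ofc y : connect e c y.
  by have [->|yc] := eqVneq y c; [exact: connect0 | rewrite connect1 // ec].
by move=> x y; exact: connect_trans (toc x) (ofc y).
Qed.

Lemma star_no_cycle (T : eqType) (e : rel T) (c : T) :
  (forall x y, e x y -> x = c \/ y = c) ->
  ~ exists s : seq T, [/\ 3 <= size s, uniq s & cycle e s].
Proof.
move=> edge_center.
case=> -[|x0 [|x1 [|x2 r]]] [] // _ /= + /and3P[e01 e12 er].
rewrite !inE => /and4P[/norP[x01 /norP[x02 _]] /norP[x12 x1r] _ _].
have ez : e (last x2 r) x0 by move: er; rewrite rcons_path => /andP[].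
have [x1c|x2c] := edge_center _ _ e12.
- have [zc|x0c] := edge_center _ _ ez; last by rewrite x0c x1c eqxx in x01.
  by move: (mem_last x2 r); rewrite zc -x1c inE (negbTE x12) (negbTE x1r).
- have [x0c|x1c] := edge_center _ _ e01; last by rewrite x1c x2c eqxx in x12.
  by rewrite x0c x2c eqxx in x02.
Qed.

Lemma contraction_comp n (H G K : ltree n) f g :
  contraction H G f -> contraction G K g -> contraction H K (fun x => g (f x)).
Proof.
case=> f_onto f_fibre f_lf f_adj [g_onto g_fibre g_lf g_adj].
have lift_adj x y : adj G x y -> exists a b, [/\ adj H a b, f a = x & f b = y].
  by case/f_adj=> _ [a [b ?]]; exists a, b.
split.
- by move=> w; have [u <-] := g_onto w; have [a <-] := f_onto u; exists a.
- move=> a1 a2 e12; set c := g (f a1).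
  set RH := [rel x y | [&& adj H x y, g (f x) == c & g (f y) == c]].
  have in_fibre a b : f a = f b -> g (f a) = c -> connect RH a b.
    move=> eab gac; apply: connect_sub (f_fibre a b eab) => x y /and3P[xy /eqP fx /eqP fy].
    by rewrite connect1 //= xy fx fy gac !eqxx.
  suff lift p x a : path [rel x y | [&& adj G x y, g x == c & g y == c]] x p ->
      f a = x -> g x = c -> f a2 = last x p -> connect RH a a2.
    by case/connectP: (g_fibre _ _ e12) => p /lift; apply.
  elim: p x a => [|y p IH] x a /=; first by move=> _ fa gx fa2; apply: in_fibre; rewrite ?fa.
  case/andP=> /and3P[xy _ /eqP gy] yp fa gx fa2.
  have [a' [b' [ab' fa' fb']]] := lift_adj x y xy.
  apply: connect_trans (in_fibre a a' _ _) _; rewrite ?fa ?fa' //.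
  apply: connect_trans (connect1 _) (IH y b' yp fb' gy fa2).
  by rewrite /= ab' fa' fb' gx gy !eqxx.
- by move=> i; rewrite g_lf f_lf.
- move=> u v; rewrite g_adj; split.
  + case=> uv [x [y [xy gx gy]]]; have [a [b [ab fa fb]]] := lift_adj x y xy.
    by split=> //; exists a, b; rewrite fa fb.
  + case=> uv [a [b [ab ga gb]]]; split=> //; exists (f a), (f b); split=> //.
    by apply/f_adj; split; [move=> fab; apply: uv; rewrite -ga -gb fab | exists a, b].
Qed.

Definition shatterable n (P : {set {set 'I_n}}) (B : {set 'I_n}) :=
  (2 <= #|B|) && (B \subset singles P).

Definition shatter n (P Q : {set {set 'I_n}}) : {set {set 'I_n}} :=
  [set B in Q | ~~ shatterable P B] :|:
  [set [set i] | i in \bigcup_(B in Q | shatterable P B) B].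

Section Shatter.
Variables (n : nat) (P Q : {set {set 'I_n}}).

Lemma mem_shatter B : B \in shatter P Q ->
  (B \in Q /\ ~~ shatterable P B) \/
  exists2 C, C \in Q /\ shatterable P C & exists2 j, j \in C & B = [set j].
Proof.
rewrite in_setU inE => /orP[/andP[]|/imsetP[j /bigcupP[C /andP[QC sC] jC] ->]].
  by left.
by right; exists C => //; exists j.
Qed.

Lemma shatter_unbroken B : B \in Q -> ~~ shatterable P B -> B \in shatter P Q.
Proof. by move=> QB sB; rewrite in_setU inE QB sB. Qed.

Lemma shatter_singleton C j :
  C \in Q -> shatterable P C -> j \in C -> [set j] \in shatter P Q.
Proof.
move=> QC sC jC; rewrite in_setU; apply/orP; right.
by apply/imsetP; exists j => //; apply/bigcupP; exists C; rewrite ?QC.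
Qed.

Lemma ple_shatter : ple Q (shatter P Q).
Proof.
move=> B /mem_shatter[[QB _]|[C [QC _] [j jC ->]]]; first by exists B.
by exists C; rewrite ?sub1set.
Qed.

Hypothesis setpartQ : setpart Q.

Lemma setpart_shatter : setpart (shatter P Q).
Proof.
have tQ : trivIset Q by case/and3P: setpartQ.
apply/and3P; split.
- apply/eqP/setP=> i; rewrite inE; have [B QB iB] := setpart_block i setpartQ.
  apply/bigcupP; case sB: (shatterable P B).
    by exists [set i]; [exact: shatter_singleton QB sB iB | rewrite inE].
  by exists B => //; rewrite shatter_unbroken ?sB.
- apply/trivIsetP=> B1 B2 /mem_shatter B1s /mem_shatter B2s B12.
  apply/pred0P=> x /=; apply/negP=> /andP[x1 x2]; move/negP: B12; apply; apply/eqP.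
  case: B1s x1 => [[Q1 s1]|[C1 [QC1 sC1] [j1 j1C ->]]] x1;
  case: B2s x2 => [[Q2 s2]|[C2 [QC2 sC2] [j2 j2C ->]]] x2.
  + exact: trivIset_block_eq tQ Q1 Q2 x1 x2.
  + move: x2; rewrite inE => /eqP xj2; subst x.
    by rewrite (trivIset_block_eq tQ Q1 QC2 x1 j2C) sC2 in s1.
  + move: x1; rewrite inE => /eqP xj1; subst x.
    by rewrite (trivIset_block_eq tQ Q2 QC1 x2 j1C) sC1 in s2.
  + by move: x1 x2; rewrite !inE => /eqP <- /eqP <-.
- apply/negP=> /mem_shatter[[Q0 _]|[C _ [j _ j0]]].
    by case/and3P: setpartQ => _ _ /negP.
  by have := set11 j; rewrite -j0 inE.
Qed.

Lemma pprec_shatter : setpart P -> ple Q P -> pprec (shatter P Q) P.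
Proof.
move=> setpartP QP; split=> [C PC|B /mem_shatter[[_ sB] B2|[C _ [j _ ->]]]]; last 2 first.
- by rewrite /shatterable B2 in sB.
- by rewrite cards1.
have [B QB CB] := QP C PC; case sB: (shatterable P B); last first.
  by exists B => //; rewrite shatter_unbroken ?sB.
have tP : trivIset P by case/and3P: setpartP.
have [x xC] : exists x, x \in C.
  by apply/set0Pn; apply: contraTneq PC => ->; case/and3P: setpartP.
have /bigcupP[D /andP[PD /cards1P[y Dy]] xD] :
  x \in singles P by apply: subsetP (subset_trans CB _) x xC; case/andP: sB.
have CD := trivIset_block_eq tP PC PD xC xD.
move: xD; rewrite Dy inE => /eqP xy.
exists [set x]; first exact: shatter_singleton QB sB (subsetP CB x xC).
by rewrite CD Dy xy.
Qed.

End Shatter.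

Section Collapse.
Variables (n : nat) (P Q : {set {set 'I_n}}).
Hypothesis setpartQ : setpart Q.
Variables (G : ltree n) (v : 'I_(nv G)).
Hypothesis basicG : basic_pair Q G v.

Definition absorbed (x : 'I_(nv G)) :=
  (x != v) && [forall i, (lf G i == x) ==> (i \in singles P)].

Definition kept : {set 'I_(nv G)} := [set x | ~~ absorbed x].

Lemma center_kept : v \in kept.
Proof. by rewrite inE /absorbed eqxx. Qed.

Definition retract x := if absorbed x then v else x.

Definition collapse x : 'I_#|kept| := enum_rank_in center_kept (retract x).

Definition collapsed : ltree n :=
  @LTree n #|kept| (fun a b => adj G (enum_val a) (enum_val b)) (fun i => collapse (lf G i)).

Lemma retract_kept x : retract x \in kept.
Proof. by rewrite /retract; case: ifP => [_|ax]; rewrite ?center_kept ?inE ?ax. Qed.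

Lemma retract_id x : ~~ absorbed x -> retract x = x.
Proof. by rewrite /retract => /negbTE ->. Qed.

Lemma retract_center : retract v = v.
Proof. by rewrite /retract; case: ifP. Qed.

Lemma retractP x : retract x = v \/ ~~ absorbed x.
Proof. by rewrite /retract; case: ifP => ax; [left | right]. Qed.

Lemma collapseK x : enum_val (collapse x) = retract x.
Proof. exact: (enum_rankK_in center_kept (retract_kept x)). Qed.

Lemma enum_valK_collapse a : collapse (enum_val a) = a.
Proof.
have : enum_val a \in kept by exact: enum_valP.
by rewrite inE => ka; rewrite /collapse retract_id //; exact: enum_valK_in.
Qed.

Lemma collapse_eq x y : (collapse x = collapse y) <-> (retract x = retract y).
Proof. by split=> [e|e]; [rewrite -!collapseK e | rewrite /collapse e]. Qed.

Lemma collapse_center a : enum_val a = v -> a = collapse v.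
Proof. by move=> av; rewrite -(enum_valK_collapse a) av. Qed.

Lemma basic_sym : symmetric (adj G). Proof. by case: basicG => -[]. Qed.
Lemma basic_irr : irreflexive (adj G). Proof. by case: basicG => -[]. Qed.

Lemma basic_pendant x : x != v -> exists2 B, B \in Q /\ 2 <= #|B| &
  [/\ adj G v x, forall i, (lf G i == x) = (i \in B) & forall y, adj G x y -> y = v].
Proof.
case: basicG => _ lf_single pendant vertices.
have [->|[i ->] iv] := vertices x; first by rewrite eqxx.
have [B QB iB] := setpart_block i setpartQ.
have B2 : 2 <= #|B|.
  have B0 : 0 < #|B| by apply/card_gt0P; exists i.
  rewrite ltn_neqAle B0 andbT; apply: contraNneq iv => B1.
  by rewrite (lf_single B QB (esym B1) i iB).
have [u [vu luB uv]] := pendant B QB B2.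
have -> : lf G i = u by apply/eqP; rewrite luB.
by exists B.
Qed.

Lemma adj_center x y : adj G x y -> x = v \/ y = v.
Proof.
move=> xy; have [->|xv] := eqVneq x v; first by left.
by right; have [B _ [_ _]] := basic_pendant xv; apply.
Qed.

Lemma absorbed_adj x : absorbed x -> adj G v x.
Proof. by case/andP=> xv _; have [B _ []] := basic_pendant xv. Qed.

Lemma collapse_contraction : contraction G collapsed collapse.
Proof.
split=> //.
- by move=> a; exists (enum_val a); exact: enum_valK_collapse.
- move=> u1 u2 /collapse_eq e12.
  set R := [rel x y | [&& adj G x y, collapse x == collapse u1 & collapse y == collapse u1]].
  have to_center x : retract x = v -> retract u1 = v -> connect R x v /\ connect R v x.
    move=> rx r1; have [->|xv] := eqVneq x v; first by split; exact: connect0.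
    have ax : absorbed x.
      by move: rx; rewrite /retract; case: ifP => // _ xv'; rewrite xv' eqxx in xv.
    have [cx cv] : collapse x = collapse u1 /\ collapse v = collapse u1.
      by split; apply/collapse_eq; rewrite ?retract_center ?rx r1.
    have vx := absorbed_adj ax.
    by split; apply: connect1; rewrite /= cx cv eqxx !andbT // basic_sym.
  have [r1|n1] := retractP u1.
    have [c1 _] := to_center u1 r1 r1; have [_ c2] := to_center u2 (etrans (esym e12) r1) r1.
    exact: connect_trans c1 c2.
  have [r2|n2] := retractP u2.
    have r1 : retract u1 = v by rewrite e12.
    have [c1 _] := to_center u1 r1 r1; have [_ c2] := to_center u2 r2 r1.
    exact: connect_trans c1 c2.
  by move: e12; rewrite !retract_id // => ->; exact: connect0.
- move=> a b; split=> [ab|[ab [x [y [xy ea eb]]]]]; last subst a b.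
  + split; first by move=> e; rewrite e /= basic_irr in ab.
    by exists (enum_val a), (enum_val b); rewrite !enum_valK_collapse.
  + rewrite /= !collapseK.
    have rxy : retract x <> retract y by move=> e; apply: ab; apply/collapse_eq.
    case: (adj_center xy) => [xv|yv]; [subst x | subst y]; rewrite retract_center in rxy *.
    * by case: (retractP y) rxy => [-> | /retract_id ->].
    * by case: (retractP x) rxy => [-> | /retract_id ->].
Qed.

Lemma enum_val_center a : (enum_val a == v) = (a == collapse v).
Proof.
apply/eqP/eqP=> [|->]; first exact: collapse_center.
by rewrite collapseK retract_center.
Qed.

Lemma collapsed_adj_center a : a != collapse v -> adj collapsed (collapse v) a.
Proof.
rewrite -enum_val_center => /basic_pendant[B _ [va _ _]].
by rewrite /= collapseK retract_center.
Qed.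

Lemma collapsed_adj a b : adj collapsed a b -> a = collapse v \/ b = collapse v.
Proof. by case/adj_center=> /eqP; rewrite enum_val_center => /eqP; [left | right]. Qed.

Lemma collapsed_degree_center :
  3 <= #|[set u | adj collapsed (collapse v) u]| + #|[set i | lf collapsed i == collapse v]|.
Proof.
case: basicG => -[_ _ _ _ degG] _ _ vertices.
set N := [set y | adj G v y]; set Lv := [set i | lf G i == v].
set A := [set y | absorbed y]; set LA := [set i | absorbed (lf G i)].
have kept_nbrs : #|N :\: A| <= #|[set u | adj collapsed (collapse v) u]|.
  have inj : {in N :\: A &, injective collapse}.
    by move=> x y; rewrite !inE => /andP[nx _] /andP[ny _] /collapse_eq; rewrite !retract_id.
  rewrite -(card_in_imset inj); apply/subset_leq_card/subsetP=> _ /imsetP[y + ->].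
  by rewrite !inE => /andP[ay vy]; rewrite /= !collapseK retract_center retract_id.
have new_leaves : #|Lv| + #|LA| <= #|[set i | lf collapsed i == collapse v]|.
  rewrite -cardsUI; have -> : Lv :&: LA = set0.
    by apply/setP=> i; rewrite !inE; apply/negbTE/andP=> -[/eqP ->]; rewrite /absorbed eqxx.
  rewrite cards0 addn0; apply/subset_leq_card/subsetP=> i.
  rewrite !inE => /orP[/eqP li|ai]; apply/eqP/collapse_eq; rewrite retract_center //.
    by rewrite li retract_center.
  by rewrite /retract ai.
have absorbed_leaves : #|A| <= #|LA|.
  apply: leq_trans (leq_imset_card (lf G) LA); apply/subset_leq_card/subsetP=> z.
  rewrite inE => az; have [zv|[i zi]] := vertices z; first by rewrite zv /absorbed eqxx in az.
  by apply/imsetP; exists i; rewrite // inE -zi.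
have nbrs : #|N| <= #|N :\: A| + #|A|.
  by rewrite -(cardsID A N) addnC leq_add2l subset_leq_card ?subsetIr.
have := degG v; rewrite -/N -/Lv; lia.
Qed.

Lemma collapsed_sym : symmetric (adj collapsed).
Proof. by move=> a b; rewrite /= basic_sym. Qed.

Lemma stable_collapsed : stable collapsed.
Proof.
split.
- exact: collapsed_sym.
- by move=> a; rewrite /= basic_irr.
- by apply: (star_connect collapsed_sym) => a /collapsed_adj_center.
- exact: star_no_cycle collapsed_adj.
move=> a; have [->|av] := eqVneq a (collapse v); first exact: collapsed_degree_center.
move: (av); rewrite -enum_val_center => /basic_pendant[B [_ B2] [_ lfB _]].
have nbr : 0 < #|[set u | adj collapsed a u]|.
  by apply/card_gt0P; exists (collapse v); rewrite inE collapsed_sym collapsed_adj_center.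
have leaves : #|B| <= #|[set i | lf collapsed i == a]|.
  apply/subset_leq_card/subsetP=> i; rewrite -lfB inE /= => /eqP ->.
  by rewrite enum_valK_collapse.
lia.
Qed.

Lemma retract_shattered C j :
  C \in Q -> shatterable P C -> j \in C -> retract (lf G j) = v.
Proof.
move=> QC sC jC; have [->|jv] := eqVneq (lf G j) v; first exact: retract_center.
have [B [QB _] [_ lfB _]] := basic_pendant jv.
have CB : C = B by apply: trivIset_block_eq QC QB jC _; [case/and3P: setpartQ | rewrite -lfB].
rewrite -{}CB in lfB; case/andP: sC => _ /subsetP CP.
have absj : absorbed (lf G j).
  by rewrite /absorbed jv; apply/forallP=> i; rewrite lfB; apply/implyP/CP.
by rewrite /retract absj.
Qed.

Lemma basic_collapsed : basic_pair (shatter P Q) collapsed (collapse v).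
Proof.
have stG := stable_collapsed.
case: basicG => _ lf_single pendant vertices; split=> //.
- move=> B /mem_shatter[[QB _]|[C [QC sC] [j jC ->]]] B1 i iB; apply/collapse_eq.
    by rewrite (lf_single B QB B1 i iB).
  by move: iB; rewrite inE => /eqP ->; rewrite retract_center (retract_shattered QC sC jC).
- move=> B /mem_shatter[[QB sB]|[C _ [j _ ->]]] B2; last by rewrite cards1 in B2.
  have [u [vu lfB uv]] := pendant B QB B2.
  have ku : ~~ absorbed u.
    apply: contra sB => /andP[_ /forallP lfP]; rewrite /shatterable B2.
    by apply/subsetP=> i; rewrite -lfB => /eqP lfi; have := lfP i; rewrite lfi eqxx.
  exists (collapse u); split.
  + by rewrite /= !collapseK retract_center retract_id.
  + move=> i; rewrite -lfB /=; apply/eqP/eqP=> [/collapse_eq|->//].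
    rewrite (retract_id ku); case: (retractP (lf G i)) => [->|/retract_id -> //] uv'.
    by rewrite -uv' basic_irr in vu.
  + by move=> a; rewrite /= collapseK retract_id // => /uv /collapse_center.
- move=> a; have [/collapse_center|[i ai]] := vertices (enum_val a); first by left.
  by right; exists i; rewrite /= -ai enum_valK_collapse.
Qed.

End Collapse.

Theorem lemma6p3 (n : nat) (P Q : {set {set 'I_n}}) :
  setpart P -> 3 <= #|P| <= n - 1 ->
  setpart Q -> ple Q P -> 3 <= #|Q| ->
  exists Q' : {set {set 'I_n}},
    [/\ setpart Q', pprec Q' P, ple Q Q' &
        forall (H : ltree n), stable H ->
          forall w : 'I_(nv H), inZ Q H w -> inZ Q' H w].
Proof.
move=> setpartP _ setpartQ QP _.
exists (shatter P Q); split.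
- exact: setpart_shatter.
- exact: pprec_shatter.
- exact: ple_shatter.
move=> H _ w [G [v [f [basicG Hf fw]]]].
exists (collapsed P v), (collapse P v v), (fun x => collapse P v (f x)); split.
- exact: basic_collapsed.
- exact: contraction_comp Hf (collapse_contraction P setpartQ basicG).
- by rewrite fw.
Qed.
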